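(* Let $m\ge1$ and let $\mathcal{E}:\ w''=w^m\Phi(z,w,w'/w^m)$ and $\mathcal{E}^*:\ w''=w^m\Phi^*(z,w,w'/w^m)$ be two ODEs, where $\Phi,\Phi^*\in\mathbb{C}[[z,w,\zeta]]$ satisfy $\Phi,\Phi^*=O(\zeta^2)$. Write $\Phi=\sum_{k\ge2}\Phi_k(z,w)\zeta^k$, $\Phi_2=\sum_jA_j(w)z^j$, $\Phi_3=\sum_jB_j(w)z^j$, and similarly $A_j^*,B_j^*$ for $\Phi^*$. If there exists a transformation from $\mathcal{E}$ to $\mathcal{E}^*$ of the admissible kind described below, then $A_0(0)=A_0^*(0)$, $A_1(0)=A_1^*(0)$, $B_0(0)=B_0^*(0)$, $B_1(0)=B_1^*(0)$.
   Context: An admissible transformation is an invertible formal map $(z,w)\mapsto(z+f(z,w),\ w+wg_0(w)+w^mg(z,w))$ with $f(0,0)=0$, $f_z(0,0)=0$, $g_0(0)=0$, $g(z,w)$ divisible by $zw$, and $g_0^{(\ell)}(0)\in\mathbb{R}$ for $\ell\le m-1$, which transforms $\mathcal{E}$ into $\mathcal{E}^*$, i.e. maps graphs of solutions of one equation to graphs of solutions of the other (for formal objects, in the sense of the standard transformation rule for second order ODEs under point transformations). *)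

From HB Require Import structures.
From mathcomp Require Import all_boot all_order all_algebra.
From mathcomp Require Import complex.
From mathcomp Require Import Rstruct.

Set Implicit Arguments.
Unset Strict Implicit.
Unset Printing Implicit Defensive.
Import Order.TTheory GRing.Theory Num.Theory.
Local Open Scope ring_scope.

Definition Cplx : numClosedFieldType := (Rdefinitions.R)[i].

Section FPS.
Variable K : comNzRingType.

(* ps3 K = K[[z,w,zeta]] : F a b c is the coefficient of z^a w^b zeta^c. *)
Definition ps3 := nat -> nat -> nat -> K.
Definition ps2 := nat -> nat -> K.
Definition ps1 := nat -> K.

Definition lift2 (F : ps2) : ps3 := fun a b c => if c == 0%N then F a b else 0.
Definition lift1 (F : ps1) : ps3 :=
  fun a b c => if (a == 0%N) && (c == 0%N) then F b else 0.

Definition psC (k : K) : ps3 :=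
  fun a b c => if [&& a == 0%N, b == 0%N & c == 0%N] then k else 0.
Definition psmono (i j k : nat) : ps3 :=
  fun a b c => if [&& a == i, b == j & c == k] then 1 else 0.
Definition psz : ps3 := psmono 1 0 0.
Definition psw : ps3 := psmono 0 1 0.

Definition psadd (F G : ps3) : ps3 := fun a b c => F a b c + G a b c.
Definition psopp (F : ps3) : ps3 := fun a b c => - F a b c.
Definition pssub (F G : ps3) : ps3 := psadd F (psopp G).
Definition psscale (k : K) (F : ps3) : ps3 := fun a b c => k * F a b c.
Definition psmul (F G : ps3) : ps3 := fun a b c =>
  \sum_(i < a.+1) \sum_(j < b.+1) \sum_(k < c.+1)
     F i j k * G (a - i)%N (b - j)%N (c - k)%N.
Fixpoint psexp (F : ps3) (n : nat) : ps3 :=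
  match n with 0%N => psC 1 | n'.+1 => psmul F (psexp F n') end.

Definition dz (F : ps3) : ps3 := fun a b c => (a.+1)%:R * F a.+1 b c.
Definition dw (F : ps3) : ps3 := fun a b c => (b.+1)%:R * F a b.+1 c.

(* composition Phi(X, Y, Q), meaningful when X, Y, Q have zero constant term
   (then only finitely many terms contribute to each coefficient, namely
   those with i + j + k <= a + b + c). *)
Definition pscomp (Phi X Y Q : ps3) : ps3 := fun a b c =>
  let n := (a + b + c)%N in
  \sum_(i < n.+1) \sum_(j < n.+1) \sum_(k < n.+1)
     Phi i j k * psmul (psexp X i) (psmul (psexp Y j) (psexp Q k)) a b c.

End FPS.

Arguments psC {K}. Arguments psmono {K}. Arguments psz {K}. Arguments psw {K}.

Local Notation "F \+ G" := (psadd F G) (at level 50, left associativity).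
Local Notation "F \* G" := (psmul F G) (at level 40, left associativity).
Local Notation "F \- G" := (pssub F G) (at level 50, left associativity).

Definition adm_Z (f : ps2 Cplx) : ps3 Cplx := psz \+ lift2 f.
Definition adm_W (m : nat) (g0 : ps1 Cplx) (g : ps2 Cplx) : ps3 Cplx :=
  psw \+ (psw \* lift1 g0) \+ (psmono 0 m 0 \* lift2 g).

Definition formal_invertible (Z W : ps3 Cplx) : Prop :=
  exists Zi Wi : ps2 Cplx, Zi 0%N 0%N = 0 /\ Wi 0%N 0%N = 0 /\
    pscomp Z (lift2 Zi) (lift2 Wi) (psC 0) = psz /\
    pscomp W (lift2 Zi) (lift2 Wi) (psC 0) = psw /\
    pscomp (lift2 Zi) Z W (psC 0) = psz /\
    pscomp (lift2 Wi) Z W (psC 0) = psw.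

(* The standard transformation rule for w'' = F(z,w,p) under the point map
   (Z,W):  with D = d/dz + p d/dw + F d/dp (total derivative),
       D(DW) * DZ - DW * D(DZ) = F*(Z, W, P) * (DZ)^3,   P = DW / DZ.
   Here F = w^m Phi(z,w,p/w^m), F* = W^m Phi*(Z,W,P/W^m); we substitute
   p = w^m zeta, so that every term becomes a formal series in (z,w,zeta),
   and zeta* := P / W^m is the (unique) series with
       W^m * zeta* * DZ = DW. *)
Definition transforms (m : nat) (Phi Phis : ps3 Cplx) (Z W : ps3 Cplx) : Prop :=
  let p := psmono 0 m 1 in
  let F := psmono 0 m 0 \* Phi in
  let DZ := dz Z \+ p \* dw Z in
  let DW := dz W \+ p \* dw W in
  let DDZ := dz (dz Z) \+ psscale 2%:R (p \* dz (dw Z))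
             \+ (p \* p \* dw (dw Z)) \+ F \* dw Z in
  let DDW := dz (dz W) \+ psscale 2%:R (p \* dz (dw W))
             \+ (p \* p \* dw (dw W)) \+ F \* dw W in
  exists zs : ps3 Cplx, zs 0%N 0%N 0%N = 0 /\
    psexp W m \* zs \* DZ = DW /\
    DDW \* DZ \- DW \* DDZ
      = psexp W m \* pscomp Phis Z W zs \* psexp DZ 3.

Definition admissible_transformation (m : nat) (Phi Phis : ps3 Cplx)
    (f : ps2 Cplx) (g0 : ps1 Cplx) (g : ps2 Cplx) : Prop :=
  f 0%N 0%N = 0 /\ f 1%N 0%N = 0 /\
      g0 0%N = 0 /\
      (forall a b, (a == 0%N) || (b == 0%N) -> g a b = 0) /\ (* zw | g *)
      (forall l, (l <= m.-1)%N -> (l`!)%:R * g0 l \is Num.real) /\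
                                                (* g0^(l)(0) real, l <= m-1 *)
      formal_invertible (adm_Z f) (adm_W m g0 g) /\
      transforms m Phi Phis (adm_Z f) (adm_W m g0 g).

Definition O_zeta2 (Phi : ps3 Cplx) : Prop :=
  forall a b c, (c < 2)%N -> Phi a b c = 0.

(* Compare the coefficients of w^m on both sides of the transformation rule.
   Since g0(0) = 0 and zw | g, W = w modulo w^2 and W has no z-dependence up to
   order w^m; hence, modulo w^(m+1), DW = w^m zeta, D^2 W = w^m Phi and W^m = w^m,
   while D^2 Z = Z_zz modulo w.  If moreover f(z,0) = O(z^(A+2)), then DZ = 1 and
   zeta* = zeta modulo (w, z^(A+1)), so the w^m-coefficient of the rule reads
   Phi*(z,0,zeta) = Phi(z,0,zeta) - zeta f_zz(z,0) modulo z^(A+1).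
   As Phi and Phi* have no zeta^1-term, this gives f(z,0) = O(z^(A+3)); starting
   from f(0,0) = f_z(0,0) = 0, induction yields f(z,0) = 0, and then Phi and Phi*
   agree on w = 0. *)

From HB Require Import structures.
From mathcomp Require Import all_boot all_order all_algebra.
From mathcomp Require Import complex.
From mathcomp Require Import Rstruct.
From mathcomp Require Import zify.
From Stdlib Require Import FunctionalExtensionality.
Set Implicit Arguments. Unset Strict Implicit. Unset Printing Implicit Defensive.
Import Order.TTheory GRing.Theory Num.Theory.
Local Open Scope ring_scope.

Local Notation "F \+ G" := (psadd F G) (at level 50, left associativity).
Local Notation "F \* G" := (psmul F G) (at level 40, left associativity).
Local Notation "F \- G" := (pssub F G) (at level 50, left associativity).

Section FormalSeries.
Variable K : comNzRingType.

Definition ps0 : ps3 K := fun _ _ _ => 0.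

Lemma ps3_ext (X Y : ps3 K) : (forall a b c, X a b c = Y a b c) -> X = Y.
Proof.
move=> eqXY; do 3!apply: functional_extensionality => ?; exact: eqXY.
Qed.

Lemma sum3_delta (A B C i j k : nat) (G : nat -> nat -> nat -> K) :
  \sum_(i' < A) \sum_(j' < B) \sum_(k' < C)
     (if [&& i' == i :> nat, j' == j :> nat & k' == k :> nat] then G i' j' k' else 0)
  = if [&& (i < A)%N, (j < B)%N & (k < C)%N] then G i j k else 0.
Proof.
case: (boolP [&& (i < A)%N, (j < B)%N & (k < C)%N]) => [/and3P[hi hj hk]|out].
  rewrite (bigD1 (Ordinal hi)) //= [X in _ + X]big1 ?addr0; last first.
    move=> i' ne_i; have {}ne_i : (i' == i :> nat) = false by apply/negbTE.
    rewrite big1 // => j' _.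
    by rewrite big1 // => k' _; rewrite ne_i.
  rewrite (bigD1 (Ordinal hj)) //= [X in _ + X]big1 ?addr0; last first.
    move=> j' ne_j; have {}ne_j : (j' == j :> nat) = false by apply/negbTE.
    rewrite big1 // => k' _.
    by rewrite ne_j andbF.
  rewrite (bigD1 (Ordinal hk)) //= [X in _ + X]big1 ?addr0 ?eqxx //.
  move=> k' ne_k; have {}ne_k : (k' == k :> nat) = false by apply/negbTE.
  by rewrite ne_k !andbF.
rewrite big1 // => i' _; rewrite big1 // => j' _; rewrite big1 // => k' _.
move: out; case: ifP => // /and3P[/eqP <- /eqP <- /eqP <-].
by rewrite !ltn_ord.
Qed.

Lemma psmono_mulE (i j k : nat) (X : ps3 K) a b c :
  (psmono i j k \* X) a b c =
  if [&& (i <= a)%N, (j <= b)%N & (k <= c)%N]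
  then X (a - i)%N (b - j)%N (c - k)%N else 0.
Proof.
rewrite -[(i <= a)%N]ltnS -[(j <= b)%N]ltnS -[(k <= c)%N]ltnS.
rewrite -(sum3_delta _ _ _ _ _ _ (fun i' j' k' => X (a - i')%N (b - j')%N (c - k')%N)).
apply: eq_bigr => i' _; apply: eq_bigr => j' _; apply: eq_bigr => k' _.
by rewrite /psmono; case: ifP; rewrite ?mul1r ?mul0r.
Qed.

Lemma psmulC (X Y : ps3 K) : X \* Y = Y \* X.
Proof.
apply: ps3_ext => a b c; rewrite /psmul (reindex_inj rev_ord_inj).
apply: eq_bigr => i _; rewrite (reindex_inj rev_ord_inj).
apply: eq_bigr => j _; rewrite (reindex_inj rev_ord_inj).
apply: eq_bigr => k _ /=.
have [le_i le_j le_k] : [/\ (i <= a)%N, (j <= b)%N & (k <= c)%N].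
  by split; rewrite -ltnS.
by rewrite !subSS !subKn // mulrC.
Qed.

Lemma psmul1l (X : ps3 K) : psC 1 \* X = X.
Proof. by apply: ps3_ext => a b c; rewrite psmono_mulE !subn0. Qed.

Lemma psmul1r (X : ps3 K) : X \* psC 1 = X.
Proof. by rewrite psmulC psmul1l. Qed.

Lemma psmul0r (X : ps3 K) : X \* ps0 = ps0.
Proof.
apply: ps3_ext => a b c; rewrite /psmul big1 // => i _; rewrite big1 // => j _.
by rewrite big1 // => k _; rewrite mulr0.
Qed.

Lemma psadd0l (X : ps3 K) : ps0 \+ X = X.
Proof. by apply: ps3_ext => a b c; rewrite /psadd add0r. Qed.

Lemma psadd0r (X : ps3 K) : X \+ ps0 = X.
Proof. by apply: ps3_ext => a b c; rewrite /psadd addr0. Qed.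

Lemma psscale0r (k : K) : psscale k ps0 = ps0.
Proof. by apply: ps3_ext => a b c; rewrite /psscale mulr0. Qed.

Lemma psmono_mul i j k i' j' k' :
  psmono i j k \* psmono i' j' k' = psmono (i + i')%N (j + j')%N (k + k')%N :> ps3 K.
Proof.
apply: ps3_ext => a b c; rewrite psmono_mulE /psmono.
case: (leqP i a) => hi /=; last by case: eqP => //; lia.
case: (leqP j b) => hj /=; last by case: (a == _) => //; case: eqP => //; lia.
case: (leqP k c) => hk /=.
  have -> : ((a - i)%N == i') = (a == i + i')%N by apply/eqP/eqP; lia.
  have -> : ((b - j)%N == j') = (b == j + j')%N by apply/eqP/eqP; lia.
  by have -> : ((c - k)%N == k') = (c == k + k')%N by apply/eqP/eqP; lia.
by case: (a == _) => //; case: (b == _) => //; case: eqP => //; lia.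
Qed.

Lemma psmono_exp i j k n :
  psexp (psmono i j k) n = psmono (n * i)%N (n * j)%N (n * k)%N :> ps3 K.
Proof. by elim: n => [|n IHn] //=; rewrite IHn psmono_mul !mulSn. Qed.

Lemma psexp1 n : psexp (psC 1) n = psC 1 :> ps3 K.
Proof. by elim: n => [|n IHn] //=; rewrite IHn psmul1l. Qed.

Lemma dz_psz : dz psz = psC 1 :> ps3 K.
Proof. by apply: ps3_ext => -[|a] b c; rewrite /dz /psz /psmono ?mul1r ?mulr0. Qed.

Definition wdvd (p : nat) (X : ps3 K) := forall a b c, (b < p)%N -> X a b c = 0.

Lemma wdvd0 (X : ps3 K) : wdvd 0 X.
Proof. by []. Qed.

Lemma wdvd_psmono p i j k : (p <= j)%N -> wdvd p (psmono i j k).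
Proof.
move=> le_pj a b c lt_bp; rewrite /psmono.
have /negbTE -> : b != j by apply/eqP; lia.
by rewrite andbF.
Qed.

Lemma wdvd_mul p q (X Y : ps3 K) : wdvd p X -> wdvd q Y -> wdvd (p + q)%N (X \* Y).
Proof.
move=> dX dY a b c lt_b; rewrite /psmul big1 // => i _.
rewrite big1 // => j _; rewrite big1 // => k _.
case: (ltnP j p) => hj; first by rewrite dX ?mul0r.
by rewrite dY ?mulr0 //; have := ltn_ord j; lia.
Qed.

Lemma wdvd_exp p n (X : ps3 K) : wdvd p X -> wdvd (n * p)%N (psexp X n).
Proof. by move=> dX; elim: n => [|n IHn] //=; rewrite mulSn; apply: wdvd_mul. Qed.

Lemma psmul_wcoef p q (X Y : ps3 K) a c : wdvd p X -> wdvd q Y ->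
  (X \* Y) a (p + q)%N c
  = \sum_(i < a.+1) \sum_(k < c.+1) X i p k * Y (a - i)%N q (c - k)%N.
Proof.
move=> dX dY; rewrite /psmul; apply: eq_bigr => i _.
have lt_p : (p < (p + q).+1)%N by lia.
rewrite (bigD1 (Ordinal lt_p)) //= [X in _ + X]big1 ?addr0; last first.
  move=> j ne_jp; have /eqP {}ne_jp : j != p :> nat by [].
  rewrite big1 // => k _.
  case: (ltnP j p) => hj; first by rewrite dX ?mul0r.
  by rewrite dY ?mulr0 //; have := ltn_ord j; lia.
by apply: eq_bigr => k _; rewrite addKn.
Qed.

Definition wlead_eq (A p : nat) (X Y : ps3 K) :=
  [/\ wdvd p X, wdvd p Y & forall a c, (a <= A)%N -> X a p c = Y a p c].

Section WleadEq.
Variables A p q : nat.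

Lemma wlead_eq_refl (X : ps3 K) : wdvd p X -> wlead_eq A p X X.
Proof. by []. Qed.

Lemma wlead_eq0_mull (X Y : ps3 K) : wdvd q X -> (p < q)%N -> wlead_eq A p (X \* Y) ps0.
Proof.
move=> dX lt_pq; have dXY : wdvd q (X \* Y) by rewrite -[q]addn0; apply: wdvd_mul dX (wdvd0 Y).
by split=> // [a b c lt_b|a c _]; apply: dXY; lia.
Qed.

Lemma wlead_eq_add (X X' Y Y' : ps3 K) :
  wlead_eq A p X X' -> wlead_eq A p Y Y' -> wlead_eq A p (X \+ Y) (X' \+ Y').
Proof.
move=> [dX dX' eX] [dY dY' eY]; split=> [a b c lt_b|a b c lt_b|a c le_a].
- by rewrite /psadd dX ?dY ?addr0.
- by rewrite /psadd dX' ?dY' ?addr0.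
- by rewrite /psadd eX ?eY.
Qed.

Lemma wlead_eq_sub (X X' Y Y' : ps3 K) :
  wlead_eq A p X X' -> wlead_eq A p Y Y' -> wlead_eq A p (X \- Y) (X' \- Y').
Proof.
move=> eX [dY dY' eY]; apply: wlead_eq_add => //.
split=> [a b c lt_b|a b c lt_b|a c le_a].
- by rewrite /psopp dY ?oppr0.
- by rewrite /psopp dY' ?oppr0.
- by rewrite /psopp eY.
Qed.

Lemma wlead_eq_scale k (X X' : ps3 K) :
  wlead_eq A p X X' -> wlead_eq A p (psscale k X) (psscale k X').
Proof.
move=> [dX dX' eX]; split=> [a b c lt_b|a b c lt_b|a c le_a].
- by rewrite /psscale dX ?mulr0.
- by rewrite /psscale dX' ?mulr0.
- by rewrite /psscale eX.
Qed.

Lemma wlead_eq_mul (X X' Y Y' : ps3 K) :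
  wlead_eq A p X X' -> wlead_eq A q Y Y' -> wlead_eq A (p + q)%N (X \* Y) (X' \* Y').
Proof.
move=> [dX dX' eX] [dY dY' eY]; split; try exact: wdvd_mul.
move=> a c le_a; rewrite !psmul_wcoef //.
apply: eq_bigr => i _; apply: eq_bigr => k _.
have le_ia : (i <= a)%N by rewrite -ltnS.
by rewrite eX ?eY //; lia.
Qed.

Lemma wlead_eq_dz (X Y : ps3 K) : wlead_eq A.+1 p X Y -> wlead_eq A p (dz X) (dz Y).
Proof.
move=> [dX dY eXY]; split=> [a b c lt_b|a b c lt_b|a c le_a].
- by rewrite /dz dX ?mulr0.
- by rewrite /dz dY ?mulr0.
- by rewrite /dz eXY.
Qed.

End WleadEq.

Lemma wlead_eq_exp A p n (X Y : ps3 K) :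
  wlead_eq A p X Y -> wlead_eq A (n * p)%N (psexp X n) (psexp Y n).
Proof. by move=> eXY; elim: n => [|n IHn] //=; rewrite mulSn; apply: wlead_eq_mul. Qed.

Lemma wlead_eq_comp A (Phi X Y Q : ps3 K) :
  wlead_eq A 0 X psz -> wdvd 1 Y -> wlead_eq A 0 Q (psmono 0 0 1) ->
  wlead_eq A 0 (pscomp Phi X Y Q) Phi.
Proof.
move=> eX dY eQ; split=> // a c le_a; rewrite /pscomp.
set n := (a + 0 + c)%N.
transitivity (if [&& (a < n.+1)%N, (0 < n.+1)%N & (c < n.+1)%N] then Phi a 0 c else 0);
  last by rewrite ifT //; apply/and3P; split; rewrite /n; lia.
rewrite -sum3_delta; apply: eq_bigr => i _; apply: eq_bigr => j _.
apply: eq_bigr => k _; case: (posnP j) => [->|j_gt0] /=.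
  rewrite psmul1l.
  have := wlead_eq_mul (wlead_eq_exp i eX) (wlead_eq_exp k eQ).
  rewrite !muln0 => -[_ _ ->] //.
  rewrite /psz !psmono_exp psmono_mul !muln0 !muln1 /psmono.
  by rewrite !addn0 add0n [(a == _)]eq_sym [(c == _)]eq_sym; case: ifP; rewrite ?mulr1 ?mulr0.
rewrite andbF (@wdvd_mul (i * 0)%N (j * 1 + k * 0)%N) ?mulr0 //.
- exact: wdvd_exp.
- by apply: wdvd_mul; apply: wdvd_exp.
- by rewrite !muln0 muln1 addn0.
Qed.

End FormalSeries.

Arguments ps0 {K}.

Section AdmissibleTransformation.
Variable K : numDomainType.
Variables (m : nat) (f : ps2 K) (g0 : ps1 K) (g : ps2 K) (Phi Phis zs : ps3 K).
Hypothesis m_gt0 : (0 < m)%N.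
Hypotheses (f_0 : f 0%N 0%N = 0) (f_z : f 1%N 0%N = 0).
Hypothesis g0_0 : g0 0%N = 0.
Hypothesis g_zw : forall a b, (a == 0%N) || (b == 0%N) -> g a b = 0.

Let Z : ps3 K := psz \+ lift2 f.
Let W : ps3 K := psw \+ psw \* lift1 g0 \+ psmono 0 m 0 \* lift2 g.
Let p : ps3 K := psmono 0 m 1.
Let F : ps3 K := psmono 0 m 0 \* Phi.
Let D1 (X : ps3 K) : ps3 K := dz X \+ p \* dw X.
Let D2 (X : ps3 K) : ps3 K := dz (dz X) \+ psscale 2%:R (p \* dz (dw X))
  \+ p \* p \* dw (dw X) \+ F \* dw X.

Hypothesis zs_eq : psexp W m \* zs \* D1 Z = D1 W.
Hypothesis transform_eq :
  D2 W \* D1 Z \- D1 W \* D2 Z = psexp W m \* pscomp Phis Z W zs \* psexp (D1 Z) 3.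

Lemma coef_W a b c : W a b c =
  (if [&& a == 0%N, b == 1%N & c == 0%N] then 1 else 0)
  + (if (0 < b)%N && (a == 0%N) && (c == 0%N) then g0 b.-1 else 0)
  + (if (m <= b)%N && (c == 0%N) then g a (b - m)%N else 0).
Proof.
rewrite /W /psadd /psw !psmono_mulE /lift1 /lift2 /psmono !subn0 subn1 /= !andbT.
by case: (0 < b)%N; case: (m <= b)%N.
Qed.

Lemma W_w0 : wdvd 1 W.
Proof.
move=> a b c; rewrite ltnS leqn0 => /eqP ->.
rewrite coef_W /=; have -> : (m <= 0)%N = false by lia.
by rewrite andbF !addr0.
Qed.

Lemma W_w1 a c : W a 1 c = if (a == 0%N) && (c == 0%N) then 1 else 0.
Proof.
rewrite coef_W /= g0_0 if_same addr0.
case: (leqP m 1) => le_m1 /=; last by rewrite addr0.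
have -> : (1 - m = 0)%N by lia.
by rewrite g_zw ?orbT // if_same addr0.
Qed.

Lemma W_zS a b c : (b <= m)%N -> W a.+1 b c = 0.
Proof.
move=> le_bm; rewrite coef_W /= andbF /= !add0r.
case: (leqP m b) => //= le_mb.
have -> : (b - m = 0)%N by lia.
by rewrite g_zw ?orbT // if_same.
Qed.

Lemma wdvd_p : wdvd m p.
Proof. exact: wdvd_psmono. Qed.

Lemma wdvd_F : wdvd m F.
Proof. by rewrite -[m]addn0; apply: wdvd_mul; [apply: wdvd_psmono | apply: wdvd0]. Qed.

Lemma lead_Z B : (forall a, (a <= B)%N -> f a 0 = 0) -> wlead_eq B 0 Z psz.
Proof.
by move=> f_w0_small; split=> // a c le_a; rewrite /Z /psadd /lift2 f_w0_small // if_same addr0.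
Qed.

Lemma coef_dz2Z a c :
  dz (dz Z) a 0 c = if c == 0%N then (a.+1)%:R * ((a.+2)%:R * f a.+2 0) else 0.
Proof. by rewrite /dz /Z /psadd /psz /psmono /lift2 /= add0r; case: (c == 0%N); rewrite ?mulr0. Qed.

Section LeadingParts.
Variable A : nat.

Lemma lead_W : wlead_eq A 1 W psw.
Proof. by split=> [||a c _]; [exact: W_w0 | exact: wdvd_psmono | rewrite W_w1]. Qed.

Lemma lead_expW : wlead_eq A m (psexp W m) (psmono 0 m 0).
Proof. by have := wlead_eq_exp m lead_W; rewrite /psw psmono_exp muln1 muln0. Qed.

Lemma lead_dwW : wlead_eq A 0 (dw W) (psC 1).
Proof. by split=> // a c _; rewrite /dw W_w1 mul1r. Qed.

Lemma lead_D1W : wlead_eq A m (D1 W) p.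
Proof.
have lead_dzW : wlead_eq A m (dz W) ps0.
  by split=> // [a b c lt_bm|a c _]; rewrite /dz W_zS ?mulr0 //; lia.
have := wlead_eq_mul (wlead_eq_refl A wdvd_p) lead_dwW.
rewrite addn0 psmul1r => lead_pdwW.
by have := wlead_eq_add lead_dzW lead_pdwW; rewrite psadd0l.
Qed.

Lemma lead_D2W : wlead_eq A m (D2 W) F.
Proof.
have lead_dz2W : wlead_eq A m (dz (dz W)) ps0.
  by split=> // [a b c lt_bm|a c _]; rewrite /dz W_zS ?mulr0 //; lia.
have lead_dzdwW : wlead_eq A 0 (dz (dw W)) ps0.
  by split=> // a c _; rewrite /dz /dw W_zS ?mulr0.
have := wlead_eq_mul (wlead_eq_refl A wdvd_p) lead_dzdwW.
rewrite addn0 psmul0r => lead_pdzdwW.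
have lead_ppdw2W : wlead_eq A m (p \* p \* dw (dw W)) ps0.
  by apply: wlead_eq0_mull (wdvd_mul wdvd_p wdvd_p) _; lia.
have := wlead_eq_mul (wlead_eq_refl A wdvd_F) lead_dwW.
rewrite addn0 psmul1r => lead_FdwW.
have := wlead_eq_add (wlead_eq_add (wlead_eq_add lead_dz2W
  (wlead_eq_scale 2%:R lead_pdzdwW)) lead_ppdw2W) lead_FdwW.
by rewrite psscale0r !psadd0l.
Qed.

Lemma lead_D2Z : wlead_eq A 0 (D2 Z) (dz (dz Z)).
Proof.
have wdvd_pp : wdvd (m + m) (p \* p) by apply: wdvd_mul wdvd_p wdvd_p.
have := wlead_eq_add (wlead_eq_add (wlead_eq_add (wlead_eq_refl A (wdvd0 (dz (dz Z))))
  (wlead_eq_scale 2%:R (wlead_eq0_mull A (dz (dw Z)) wdvd_p m_gt0)))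
  (wlead_eq0_mull A (dw (dw Z)) wdvd_pp (ltn_addr m m_gt0)))
  (wlead_eq0_mull A (dw Z) wdvd_F m_gt0).
by rewrite psscale0r !psadd0r.
Qed.

Hypothesis f_w0_small : forall a, (a <= A.+1)%N -> f a 0 = 0.

Lemma lead_D1Z : wlead_eq A 0 (D1 Z) (psC 1).
Proof.
have := wlead_eq_add (wlead_eq_dz (lead_Z f_w0_small)) (wlead_eq0_mull A (dw Z) wdvd_p m_gt0).
by rewrite dz_psz psadd0r.
Qed.

Lemma lead_zs : wlead_eq A 0 zs (psmono 0 0 1).
Proof.
have := wlead_eq_mul (wlead_eq_mul lead_expW (wlead_eq_refl A (wdvd0 zs))) lead_D1Z.
rewrite !addn0 psmul1r zs_eq => -[_ _ D1W_Wmzs]; split=> // a c le_a.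
have [_ _ D1W_p] := lead_D1W.
move: (D1W_Wmzs a c le_a); rewrite D1W_p // psmono_mulE /= subnn !subn0 leqnn /= => <-.
by rewrite /p /psmono !eqxx.
Qed.

Lemma coef_Phis_w0 a c : (a <= A)%N -> Phis a 0 c.+1 = Phi a 0 c.+1 - dz (dz Z) a 0 c.
Proof.
move=> le_a.
have lead_comp : wlead_eq A 0 (pscomp Phis Z W zs) Phis.
  apply: wlead_eq_comp W_w0 lead_zs.
  by apply: lead_Z => b le_b; apply: f_w0_small; apply: leqW.
have := wlead_eq_sub (wlead_eq_mul lead_D2W lead_D1Z) (wlead_eq_mul lead_D1W lead_D2Z).
have := wlead_eq_mul (wlead_eq_mul lead_expW lead_comp) (wlead_eq_exp 3 lead_D1Z).
rewrite -transform_eq !addn0 psexp1 !psmul1r => -[_ _ rhs] [_ _ lhs].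
move: (lhs a c.+1 le_a); rewrite rhs // /pssub /psadd /psopp /F /p !psmono_mulE /=.
by rewrite subnn !subn0 leqnn /= subn1 => <-.
Qed.

End LeadingParts.

Lemma f_w0_eq0 : (forall a, Phi a 0 1 = Phis a 0 1) -> forall a, f a 0 = 0.
Proof.
move=> Phi_eq; suff f_le n a : (a <= n.+1)%N -> f a 0 = 0 by move=> a; apply: (f_le a).
elim: n a => [|n IHn] a; first by case: a => [|[|a]].
rewrite leq_eqVlt => /orP[/eqP ->|]; last exact: IHn.
have := coef_Phis_w0 IHn 0 (leqnn n); rewrite coef_dz2Z -Phi_eq /=.
rewrite -{1}[Phi n 0 1]subr0 => /addrI/oppr_inj/esym/eqP.
by rewrite !mulf_eq0 !pnatr_eq0 => /eqP.
Qed.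

Lemma Phis_w0_eq : (forall a, Phi a 0 1 = Phis a 0 1) ->
  forall a c, Phi a 0 c.+2 = Phis a 0 c.+2.
Proof.
move=> Phi_eq a c; rewrite (@coef_Phis_w0 a) // => [|b _]; last exact: f_w0_eq0.
by rewrite coef_dz2Z subr0.
Qed.

End AdmissibleTransformation.

Theorem lemma4p2 (m : nat) (Phi Phis : ps3 Cplx) :
  (1 <= m)%N -> O_zeta2 Phi -> O_zeta2 Phis ->
  (exists (f : ps2 Cplx) (g0 : ps1 Cplx) (g : ps2 Cplx),
      admissible_transformation m Phi Phis f g0 g) ->
  [/\ Phi 0%N 0%N 2%N = Phis 0%N 0%N 2%N, Phi 1%N 0%N 2%N = Phis 1%N 0%N 2%N,
      Phi 0%N 0%N 3%N = Phis 0%N 0%N 3%N & Phi 1%N 0%N 3%N = Phis 1%N 0%N 3%N].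
Proof.
move=> m_gt0 Phi_O2 Phis_O2 [f [g0 [g [f_0 [f_z [g0_0 [g_zw [_ [_ transf]]]]]]]]].
have [zs [_ [zs_eq transform_eq]]] := transf.
have Phi_w0_1 a : Phi a 0 1 = Phis a 0 1 by rewrite Phi_O2 ?Phis_O2.
have := Phis_w0_eq m_gt0 f_0 f_z g0_0 g_zw zs_eq transform_eq Phi_w0_1.
by move=> Phi_w0; split; apply: Phi_w0.
Qed.
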